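(* Let $\alpha\ge2$ and $k\ge1$ be integers. Let $x$ be a word of length $n$ chosen uniformly at random from $\{1,\dots,\alpha\}^n$. The expected number of pairs $(i,j)$ with $1\le i\le j\le n$ such that $x[i..j]$ is a $k$-anti-power equals $$\sum_{m=1}^{\lfloor n/k\rfloor}(n+1-km)\prod_{\ell=0}^{k-1}\left(1-\frac{\ell}{\alpha^m}\right),$$ and, for fixed $\alpha$ and $k$, this expectation is $\Theta(n^2)$ as $n\to\infty$.
   Context: $x[i..j]$ denotes the contiguous subword of $x$ from the $i$-th to the $j$-th letter. A $k$-anti-power is a word $w=w_1\cdots w_k$ with $|w_1|=\cdots=|w_k|\ge1$ and $w_1,\dots,w_k$ pairwise distinct. *)

From mathcomp Require Import all_boot all_order all_algebra.
Set Implicit Arguments. Unset Strict Implicit. Unset Printing Implicit Defensive.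
Import Order.TTheory GRing.Theory Num.Theory.

Definition blocks (T : Type) (k m : nat) (w : seq T) : seq (seq T) :=
  [seq take m (drop (t * m) w) | t <- iota 0 k].

Definition anti_power (T : eqType) (k : nat) (w : seq T) : bool :=
  [exists m : 'I_(size w).+1,
     [&& 0 < (m : nat), size w == k * m & uniq (blocks k m w)]].

(* x[i..j] (0-indexed, inclusive) *)
Definition subword (T : Type) (w : seq T) (i j : nat) : seq T :=
  take (j - i).+1 (drop i w).

Definition num_antipower_factors (T : eqType) (k : nat) (w : seq T) : nat :=
  #|[set p : 'I_(size w) * 'I_(size w) |
      ((p.1 : nat) <= p.2) && anti_power k (subword w p.1 p.2)]|.

Definition expected_antipowers (alpha k n : nat) : rat :=
  ((\sum_(x : n.-tuple 'I_alpha) (num_antipower_factors k x)%:R)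
     / (alpha ^ n)%:R)%R.

From mathcomp Require Import all_boot all_order all_algebra.
From mathcomp Require Import zify lra.
Import Order.TTheory GRing.Theory Num.Theory.

Set Implicit Arguments.
Unset Strict Implicit.
Unset Printing Implicit Defensive.

(* By linearity of expectation, each of the n + 1 - L factors of length L of a
   uniform random word is a uniform random word of length L.  It can only be a
   k-anti-power when L = k m, and then it is one exactly when its k blocks, which
   are k independent uniform words of length m, are pairwise distinct: there are
   (alpha^m)^_k such k-tuples of blocks, whence the product formula.  For the
   Theta(n^2) bound, a word has at most n^2 factors, while each m between 2k and
   n/(2k) contributes at least n/2 factors, each an anti-power with probability
   at least 2^-k since alpha^m >= 2k. *)

Section TupleSums.
Variable T : finType.

Lemma sum_tuple0 (F : seq T -> nat) : \sum_(x : 0.-tuple T) F x = F [::].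
Proof. by rewrite (big_pred1 [tuple]) // => x; rewrite !inE tuple0 eqxx. Qed.

Lemma sum_tuple_cons n (F : seq T -> nat) :
  \sum_(x : n.+1.-tuple T) F x = \sum_(a : T) \sum_(x : n.-tuple T) F (a :: x).
Proof.
rewrite pair_big /= (reindex (fun p : T * n.-tuple T => [tuple of p.1 :: p.2])) /=.
  by apply: eq_bigr => -[a x].
exists (fun x : n.+1.-tuple T => (thead x, [tuple of behead x])) => [[a x] _|x _].
  by congr pair; apply: val_inj.
by apply: val_inj; case: x => -[|a s].
Qed.

Lemma sum_tuple_cat a b (F : seq T -> nat) :
  \sum_(w : (a + b).-tuple T) F w =
  \sum_(x : a.-tuple T) \sum_(y : b.-tuple T) F (x ++ y).
Proof.
elim: a F => [|a IH] F.
  by rewrite (sum_tuple0 (fun x => \sum_(y : b.-tuple T) F (x ++ y))).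
rewrite sum_tuple_cons (sum_tuple_cons _ (fun x => \sum_(y : b.-tuple T) F (x ++ y))).
by apply: eq_bigr => c _; rewrite (IH (fun s => F (c :: s))).
Qed.

Lemma sum_tuple_take n L (F : seq T -> nat) : L <= n ->
  \sum_(x : n.-tuple T) F (take L x) = #|T| ^ (n - L) * \sum_(w : L.-tuple T) F w.
Proof.
elim: L n F => [|L IH] n F L_le.
  rewrite sum_tuple0 subn0 -card_tuple -sum1_card big_distrl /=.
  by apply: eq_bigr => x _; rewrite take0 mul1n.
case: n L_le => [//|n] L_le.
rewrite (sum_tuple_cons _ (fun x => F (take L.+1 x))) sum_tuple_cons subSS big_distrr /=.
by apply: eq_bigr => a _; rewrite (IH n (fun s => F (a :: s))).
Qed.

Lemma sum_tuple_factor n i L (F : seq T -> nat) : i + L <= n ->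
  \sum_(x : n.-tuple T) F (take L (drop i x)) =
  #|T| ^ (n - L) * \sum_(w : L.-tuple T) F w.
Proof.
elim: i n => [|i IH] n iL_le.
  under eq_bigr do rewrite drop0.
  exact: sum_tuple_take.
case: n iL_le => [//|n]; rewrite addSn ltnS => iL_le.
rewrite (sum_tuple_cons _ (fun x => F (take L (drop i.+1 x)))) /=.
under eq_bigr do rewrite IH //.
by rewrite sum_nat_const mulnA -expnS subSn // (leq_trans (leq_addl i L)).
Qed.

End TupleSums.

Section Blocks.
Variable T : finType.

Lemma blocks_cat k m (x y : seq T) : size x = m ->
  blocks k.+1 m (x ++ y) = x :: blocks k m y.
Proof.
move=> size_x; rewrite /blocks /= drop0 take_size_cat //; congr cons.
rewrite -(addn0 1) iotaDl -map_comp; apply: eq_map => t /=.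
by rewrite add1n mulSn drop_cat size_x ltnNge leq_addr /= addKn.
Qed.

Lemma sum_tuple_blocks k m (F : seq (seq T) -> nat) :
  \sum_(w : (k * m).-tuple T) F (blocks k m w) =
  \sum_(t : k.-tuple (m.-tuple T)) F (map val t).
Proof.
elim: k F => [|k IH] F.
  by rewrite (sum_tuple0 (fun w => F (blocks 0 m w))) (sum_tuple0 (fun t => F (map val t))).
rewrite (sum_tuple_cat m (k * m) (fun w => F (blocks k.+1 m w))).
rewrite (sum_tuple_cons _ (fun t : seq (m.-tuple T) => F (map val t))).
apply: eq_bigr => x _.
under eq_bigr do rewrite blocks_cat ?size_tuple //.
exact: (IH (fun s => F (val x :: s))).
Qed.

Lemma sum_uniq_blocks k m :
  \sum_(w : (k * m).-tuple T) (uniq (blocks k m w) : nat) = (#|T| ^ m) ^_ k.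
Proof.
rewrite (sum_tuple_blocks k m (fun s => (uniq s : nat))).
rewrite -card_tuple -(card_uniq_tuples k predT) -sum1_card [RHS]big_mkcond /=.
apply: eq_bigr => t _; rewrite inE all_predT map_inj_uniq //; exact: val_inj.
Qed.

End Blocks.

Lemma anti_power_dvd (T : eqType) k (w : seq T) : anti_power k w -> k %| size w.
Proof. by case/existsP => m /and3P [_ /eqP size_w _]; rewrite size_w dvdn_mulr. Qed.

Lemma anti_powerE (T : eqType) k m (w : seq T) : 0 < k -> 0 < m ->
  size w = k * m -> anti_power k w = uniq (blocks k m w).
Proof.
move=> k_gt0 m_gt0 size_w; apply/existsP/idP => [[m' /and3P [_ /eqP e]]|uniq_w].
  suff -> : m = m' by [].
  by apply/eqP; rewrite -(eqn_pmul2l k_gt0) -e size_w.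
have m_lt : m < (size w).+1 by rewrite ltnS size_w leq_pmull.
by exists (Ordinal m_lt); rewrite /= m_gt0 size_w eqxx uniq_w.
Qed.

Definition num_anti_powers (T : finType) k L : nat :=
  \sum_(w : L.-tuple T) (anti_power k w : nat).

Lemma num_anti_powers_ndvd (T : finType) k L : ~~ (k %| L) -> num_anti_powers T k L = 0.
Proof.
move=> k_ndvd; apply: big1 => w _; apply/eqP; rewrite eqb0.
by apply: contra k_ndvd => /anti_power_dvd; rewrite size_tuple.
Qed.

Lemma num_anti_powers_mul (T : finType) k m : 0 < k -> 0 < m ->
  num_anti_powers T k (k * m) = (#|T| ^ m) ^_ k.
Proof.
move=> k_gt0 m_gt0; rewrite -sum_uniq_blocks; apply: eq_bigr => w _.
by rewrite (anti_powerE k_gt0 m_gt0) // size_tuple.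
Qed.

Lemma num_antipower_factorsE (T : eqType) k (w : seq T) :
  num_antipower_factors k w =
  \sum_(0 <= i < size w) \sum_(0 <= j < size w)
     ((i <= j) && anti_power k (subword w i j) : nat).
Proof.
rewrite /num_antipower_factors -sum1_card big_mkcond /= big_mkord.
under [RHS]eq_bigr do rewrite big_mkord.
rewrite pair_bigA; apply: eq_bigr => p _.
by rewrite inE; case: (_ && _).
Qed.

Lemma sum_num_antipower_factors (T : finType) k n :
  \sum_(x : n.-tuple T) num_antipower_factors k x =
  \sum_(0 <= i < n) \sum_(0 <= j < n)
     (if i <= j then #|T| ^ (n - (j - i).+1) * num_anti_powers T k (j - i).+1 else 0).
Proof.
under [LHS]eq_bigr do rewrite num_antipower_factorsE size_tuple.
rewrite exchange_big; apply: eq_big_nat => i /andP [_ i_lt].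
rewrite exchange_big; apply: eq_big_nat => j /andP [_ j_lt].
case: leqP => [le_ij|_]; last exact: big1.
rewrite -(@sum_tuple_factor _ n i _ (fun s => (anti_power k s : nat))) //.
by rewrite addnS subnKC.
Qed.

Local Open Scope ring_scope.

Lemma natr_ffact (R : pzRingType) n k :
  (n ^_ k)%:R = \prod_(0 <= l < k) (n%:R - l%:R) :> R.
Proof.
elim: k => [|k IH]; first by rewrite big_geq.
rewrite big_nat_recr //= -IH ffactnSr natrM.
have [le_kn|lt_nk] := leqP k n; first by rewrite natrB.
by rewrite ffact_small // !mul0r.
Qed.

Lemma sum_le_pairs (R : nmodType) (h : nat -> R) n :
  \sum_(0 <= i < n) \sum_(0 <= j < n) (if (i <= j)%N then h (j - i).+1 else 0) =
  \sum_(1 <= L < n.+1) h L *+ (n.+1 - L).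
Proof.
elim: n => [|n IH]; first by rewrite !big_geq.
under eq_bigr do rewrite big_nat_recr //=.
rewrite big_split /= [X in X + _]big_nat_recr //= IH.
rewrite [X in _ + X + _]big1_seq ?addr0; last first.
  by move=> j /andP [_]; rewrite mem_index_iota => /andP [_ j_lt]; rewrite leqNgt j_lt.
under [RHS]eq_big_nat => L /andP [_ L_lt] do rewrite subSn // mulrSr.
rewrite big_split /= [X in _ = X + _]big_nat_recr //= subnn mulr0n addr0.
congr (_ + _); rewrite big_add1 /= big_nat_rev /=.
apply: eq_big_nat => i /andP [_ i_lt].
by rewrite add0n subSS leq_subr subKn // -ltnS.
Qed.

Lemma sum_multiples (R : nmodType) (f : nat -> R) k N : (0 < k)%N ->
  \sum_(1 <= L < N.+1) (if (k %| L)%N then f (L %/ k)%N else 0) =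
  \sum_(1 <= m < (N %/ k).+1) f m.
Proof.
move=> k_gt0; elim: N => [|N IH]; first by rewrite div0n !big_geq.
rewrite big_nat_recr //= IH divnS //.
case: ifP => [k_dvd|_]; last by rewrite addr0.
by rewrite k_dvd add1n [RHS]big_nat_recr.
Qed.

Definition anti_power_prob (q k m : nat) : rat :=
  \prod_(0 <= l < k) (1 - l%:R / (q ^ m)%N%:R).

Lemma anti_power_probE (T : finType) k m :
  (0 < #|T|)%N -> (0 < k)%N -> (0 < m)%N ->
  anti_power_prob #|T| k m = (num_anti_powers T k (k * m))%:R / (#|T| ^ (k * m))%:R.
Proof.
move=> T_gt0 k_gt0 m_gt0.
have qm_neq0 : (#|T| ^ m)%:R != 0 :> rat by rewrite pnatr_eq0 -lt0n expn_gt0 T_gt0.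
rewrite num_anti_powers_mul // natr_ffact mulnC expnM /anti_power_prob.
under eq_bigr do rewrite -{1}(divff qm_neq0) -mulrBl.
by rewrite prodf_div prodr_const_nat subn0 !natrX.
Qed.

Lemma num_anti_powers_density (T : finType) k L :
  (0 < #|T|)%N -> (0 < k)%N -> (0 < L)%N ->
  (num_anti_powers T k L)%:R / (#|T| ^ L)%:R =
  if (k %| L)%N then anti_power_prob #|T| k (L %/ k) else 0.
Proof.
move=> T_gt0 k_gt0 L_gt0; case: ifP => [/dvdnP [m L_eq]|k_ndvd].
  have m_gt0 : (0 < m)%N by move: L_gt0; rewrite L_eq muln_gt0 => /andP [].
  by rewrite L_eq mulnK // mulnC anti_power_probE.
by rewrite num_anti_powers_ndvd ?k_ndvd // mul0r.
Qed.

Lemma expected_antipowersE alpha k n : (0 < alpha)%N -> (0 < k)%N ->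
  expected_antipowers alpha k n =
  \sum_(1 <= m < (n %/ k).+1) (n.+1 - k * m)%:R * anti_power_prob alpha k m.
Proof.
move=> alpha_gt0 k_gt0.
pose h L := if (k %| L)%N then anti_power_prob alpha k (L %/ k) else 0.
have density L : (0 < L)%N -> (num_anti_powers 'I_alpha k L)%:R / (alpha ^ L)%:R = h L.
  by have := @num_anti_powers_density 'I_alpha k L; rewrite card_ord; apply.
rewrite /expected_antipowers -natr_sum sum_num_antipower_factors card_ord natr_sum mulr_suml.
transitivity (\sum_(0 <= i < n) \sum_(0 <= j < n) (if (i <= j)%N then h (j - i).+1 else 0)).
  apply: eq_big_nat => i _; rewrite natr_sum mulr_suml.
  apply: eq_big_nat => j /andP [_ j_lt]; case: leqP => [le_ij|_]; last by rewrite mul0r.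
  have L_le : ((j - i).+1 <= n)%N by lia.
  have alphaX_neq0 : (alpha ^ (n - (j - i).+1))%:R != 0 :> rat.
    by rewrite pnatr_eq0 -lt0n expn_gt0 alpha_gt0.
  rewrite natrM -[in X in _ / X](subnK L_le) expnD natrM -mulf_div divff // mul1r.
  exact: density.
rewrite sum_le_pairs -(sum_multiples _ _ k_gt0); apply: eq_big_nat => L _.
rewrite /h; case: ifP => [k_dvd|_]; last by rewrite mul0rn.
by rewrite mulr_natl [(k * _)%N]mulnC (divnK k_dvd).
Qed.

Lemma num_antipower_factors_le (T : eqType) k (w : seq T) :
  (num_antipower_factors k w <= size w ^ 2)%N.
Proof. by apply: leq_trans (max_card _) _; rewrite card_prod card_ord. Qed.

Lemma expected_antipowers_le alpha k n : (0 < alpha)%N ->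
  expected_antipowers alpha k n <= n%:R ^+ 2.
Proof.
move=> alpha_gt0; rewrite /expected_antipowers -natr_sum.
rewrite ler_pdivrMr ?ltr0n ?expn_gt0 ?alpha_gt0 // -natrX -natrM ler_nat.
have card_words : #|{: n.-tuple 'I_alpha}| = (alpha ^ n)%N by rewrite card_tuple card_ord.
rewrite mulnC -card_words -sum1_card big_distrl /=.
by apply: leq_sum => x _; rewrite mul1n -{2}(size_tuple x) num_antipower_factors_le.
Qed.

Lemma anti_power_prob_ge0 q k m : (0 < q)%N -> (0 < k)%N -> (0 < m)%N ->
  0 <= anti_power_prob q k m.
Proof.
move=> q_gt0 k_gt0 m_gt0; rewrite -(card_ord q) anti_power_probE ?card_ord //.
by rewrite divr_ge0 ?ler0n.
Qed.

Lemma anti_power_prob_ge q k m : (2 * k <= q ^ m)%N ->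
  ((2 ^ k)%:R)^-1 <= anti_power_prob q k m.
Proof.
move=> le_2k_qm.
rewrite natrX -exprVn -[k in _ ^+ k](subn0 k) -prodr_const_nat /anti_power_prob.
rewrite big_nat_cond [X in _ <= X]big_nat_cond.
apply: ler_prod => l /andP [/andP [_ l_lt] _].
have qm_gt0 : 0 < (q ^ m)%:R :> rat by rewrite ltr0n; lia.
have le_2l_qm : 2 * l%:R <= (q ^ m)%:R :> rat by rewrite -natrM ler_nat; lia.
have : l%:R / (q ^ m)%:R <= 2^-1 :> rat by rewrite ler_pdivrMr //; lra.
by rewrite invr_ge0 ler0n /=; lra.
Qed.

Lemma expected_antipowers_ge alpha k n :
  (2 <= alpha)%N -> (0 < k)%N -> (8 * k * k <= n)%N ->
  ((8 * k * 2 ^ k)%:R)^-1 * n%:R ^+ 2 <= expected_antipowers alpha k n.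
Proof.
move=> alpha_ge2 k_gt0 n_ge.
set c : rat := ((8 * k * 2 ^ k)%:R)^-1.
have c_ge0 : 0 <= c by rewrite invr_ge0 ler0n.
pose F m := (n.+1 - k * m)%:R * anti_power_prob alpha k m.
have F_ge0 m : (0 < m)%N -> 0 <= F m.
  by move=> m_gt0; rewrite mulr_ge0 ?ler0n ?anti_power_prob_ge0 //; lia.
set M := (n %/ (2 * k))%N.
have M_ge : (2 * k <= M)%N by rewrite leq_divRL; lia.
have M_le : (M * (2 * k) <= n)%N by rewrite leq_divM.
have M_gt : (n < M.+1 * (2 * k))%N by rewrite ltn_ceil; lia.
have M_le_nk : (M <= n %/ k)%N by rewrite leq_divRL; lia.
have F_ge m : (2 * k <= m <= M)%N -> (4 * k * n)%:R * c <= F m.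
  move=> /andP [m_ge m_le].
  apply: (@le_trans _ _ ((n.+1 - k * m)%:R * ((2 ^ k)%:R)^-1)).
    rewrite /c (natrM _ (8 * k)) invfM mulrA ler_wpM2r ?invr_ge0 ?ler0n //.
    by rewrite ler_pdivrMr ?ltr0n ?muln_gt0 // -natrM ler_nat; nia.
  rewrite ler_wpM2l ?ler0n // anti_power_prob_ge //.
  by have := ltn_expl m alpha_ge2; lia.
rewrite expected_antipowersE; try lia.
rewrite (@big_cat_nat _ _ _ (2 * k)) //=; try lia.
rewrite (@big_cat_nat _ _ _ M.+1 (2 * k)) //=; try lia.
apply: ler_wpDl.
  by rewrite big_nat_cond sumr_ge0 // => m /andP [/andP [m_ge _] _]; apply: F_ge0.
apply: ler_wpDr.
  by rewrite big_nat_cond sumr_ge0 // => m /andP [/andP [m_ge _] _]; apply: F_ge0; lia.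
apply: (@le_trans _ _ (\sum_(2 * k <= m < M.+1) (4 * k * n)%:R * c)).
  have n_le : (n <= 4 * k * (M.+1 - 2 * k))%N by nia.
  rewrite sumr_const_nat -[X in _ <= X]mulr_natr mulrAC -natrM mulrC -natrX.
  by rewrite ler_wpM2r // ler_nat; nia.
by apply: ler_sum_nat => m /andP [m_ge m_lt]; apply: F_ge; rewrite m_ge -ltnS.
Qed.

Theorem corollary6p3 (alpha k : nat) (halpha : (2 <= alpha)%N) (hk : (1 <= k)%N) :
  (forall n : nat,
     expected_antipowers alpha k n =
     \sum_(1 <= m < (n %/ k).+1)
        ((n.+1 - k * m)%N%:R *
         \prod_(0 <= l < k) (1 - l%:R / (alpha ^ m)%N%:R) : rat))
  /\
  (exists (c1 c2 : rat) (N : nat), 0 < c1 /\ 0 < c2 /\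
     forall n : nat, (N <= n)%N ->
       c1 * (n%:R ^+ 2) <= expected_antipowers alpha k n /\
       expected_antipowers alpha k n <= c2 * (n%:R ^+ 2)).
Proof.
have alpha_gt0 : (0 < alpha)%N by apply: leq_trans halpha.
split; first by move=> n; apply: expected_antipowersE.
exists ((8 * k * 2 ^ k)%:R)^-1, 1, (8 * k * k)%N; split.
  by rewrite invr_gt0 ltr0n !muln_gt0 expn_gt0 hk.
split=> // n n_ge; split; first exact: expected_antipowers_ge.
by rewrite mul1r expected_antipowers_le.
Qed.
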